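(* Let $\lambda/\mu$ be a border strip, let $P_{\lambda/\mu}=P_{\lambda/\mu}(\mathbf{p})$ be a mobile poset with underlying border strip $\lambda/\mu$, and let $\omega$ be a labeling of it that is a reversed Schur labeling on the border-strip cells and natural on the hanging $d$-complete posets (i.e. $\omega(x)<\omega(y)$ whenever $y$ covers $x$ and $x$ lies in a hanging $d$-complete poset). Then $$e_q^{\mathrm{maj}}(P_{\lambda/\mu},\omega)=\sum_{\mu\to\nu} q^{|P_{\lambda/\nu_1}|}\, e_q^{\mathrm{maj}}(P_{\lambda/\nu},\omega_\nu),$$ where the sum is over all inner corners $u$ of $\lambda/\mu$ (with $\nu$ the partition with $[\nu]=[\mu]\cup\{u\}$), $P_{\lambda/\nu}$ is the poset $P_{\lambda/\mu}$ with the element $u$ removed, $\omega_\nu$ is the restriction of $\omega$ to $P_{\lambda/\nu}$, and $P_{\lambda/\nu_1}$ is the subposet consisting of the border-strip cells of content less than $c(u)$ together with all elements of the $d$-complete posets hanging from those cells.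
   Context: English notation: $[\lambda]=\{(i,j):1\le i\le\ell(\lambda),1\le j\le\lambda_i\}$, $[\lambda/\mu]=[\lambda]\setminus[\mu]$, content $c(i,j)=j-i$. A border strip is a skew shape whose diagram is edge-connected with no $2\times2$ square. The border strip poset on $[\lambda/\mu]$ has $(i,j)\le(i',j')$ iff $i\ge i'$ and $j\ge j'$; an inner corner is a cell $u\in[\lambda/\mu]$ with $[\mu]\cup\{u\}$ a partition diagram (these are maximal). A mobile poset is obtained by choosing for each cell $x$ a finite (possibly empty) family of disjoint connected $d$-complete posets (Proctor), each with a unique maximal element, and letting $x$ cover each of these maximal elements. A reversed Schur labeling on the border strip: listing strip cells in increasing order of content, their labels strictly decrease. For a poset $R$ with injective labeling $\omega_R$ into $\mathbb{Z}$ and $|R|=r$, each order-preserving bijection $g:R\to[r]$ gives the word $\sigma=\omega_R\circ g^{-1}$; $\mathrm{maj}(\sigma)=\sum_{i:\sigma_i>\sigma_{i+1}}i$, and $e_q^{\mathrm{maj}}(R,\omega_R)=\sum_g q^{\mathrm{maj}(\omega_R\circ g^{-1})}$. *)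

From HB Require Import structures.
From mathcomp Require Import all_boot all_order all_algebra.
From mathcomp Require Import boolp.
Set Implicit Arguments. Unset Strict Implicit. Unset Printing Implicit Defensive.
Import Order.TTheory GRing.Theory Num.Theory.

Definition cell := (nat * nat)%type.

Definition is_partition (la : seq nat) : bool :=
  sorted geq la && all (fun x => 0 < x) la.

Definition in_diag (la : seq nat) (c : cell) : bool :=
  [&& 0 < c.1, c.1 <= size la, 0 < c.2 & c.2 <= nth 0 la c.1.-1].

Definition in_skew (la mu : seq nat) (c : cell) : bool :=
  in_diag la c && ~~ in_diag mu c.

Definition content (c : cell) : int := (Posz c.2 - Posz c.1)%R.

Definition adj (c d : cell) : bool :=
  ((c.1 == d.1) && ((c.2 == d.2.+1) || (d.2 == c.2.+1))) ||
  ((c.2 == d.2) && ((c.1 == d.1.+1) || (d.1 == c.1.+1))).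

Definition border_strip (la mu : seq nat) : Prop :=
  [/\ (forall c, in_diag mu c -> in_diag la c),
      (exists c, in_skew la mu c),
      (forall c d, in_skew la mu c -> in_skew la mu d ->
         exists s : seq cell, [/\ path adj c s, last c s = d & all (in_skew la mu) s])
    & (forall i j, ~ [/\ in_skew la mu (i, j), in_skew la mu (i.+1, j),
                        in_skew la mu (i, j.+1) & in_skew la mu (i.+1, j.+1)])].

Definition strip_le (c d : cell) : bool := (d.1 <= c.1) && (d.2 <= c.2).

Definition inner_corner (la mu : seq nat) (u : cell) : Prop :=
  in_skew la mu u /\
  exists nu : seq nat, is_partition nu /\ forall c, in_diag nu c = in_diag mu c || (c == u).

Section Posets.
Variable T : finType.
Implicit Types (le : rel T) (D I J : {set T}).

Definition partial_order le : Prop :=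
  [/\ reflexive le, antisymmetric le & transitive le].

Definition covers D le (x y : T) : bool :=
  [&& x \in D, y \in D, x != y, le x y &
      [forall z in D, ~~ [&& z != x, z != y, le x z & le z y]]].

Definition interval D le (w z : T) : {set T} := [set y in D | le w y && le y z].

Definition convex D le I : Prop :=
  I \subset D /\
  forall x y z, x \in I -> y \in D -> z \in I -> le x y -> le y z -> y \in I.

(* the double-tailed diamond d_k(1) on {0,..,2k-3}: a chain of k-2 elements,
   two incomparable elements (indices k-2, k-1), then a chain of k-2 elements;
   the top is 2k-3, and {0,..,2k-4} is d_k(1)^- (top removed) *)
Definition dk_lvl (k i : nat) : nat :=
  if i < k - 2 then i else if i < k then k - 2 else i.-1.
Definition dk_rel (k : nat) (i j : nat) : bool := (i == j) || (dk_lvl k i < dk_lvl k j).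

Definition iso_to le (n : nat) (r : nat -> nat -> bool) I : Prop :=
  exists f : 'I_n -> T,
    [/\ injective f, I = f @: [set: 'I_n] &
        forall i j : 'I_n, le (f i) (f j) = r i j].

Definition dk_interval D le (k : nat) (w z : T) : Prop :=
  [/\ w \in D, z \in D & iso_to le (2 * k - 2) (dk_rel k) (interval D le w z)].

Definition dkm_convex D le (k : nat) I : Prop :=
  convex D le I /\ iso_to le (2 * k - 3) (dk_rel k) I.

Definition d_complete D le : Prop :=
  forall k, 3 <= k ->
  [/\
      (forall I, dkm_convex D le k I ->
         exists w z, [/\ z \notin I, z |: I = interval D le w z & dk_interval D le k w z]),
      (forall w z y, dk_interval D le k w z -> covers D le y z -> y \in interval D le w z)
    &
      (forall I J x y, dkm_convex D le k I -> dkm_convex D le k J ->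
         x \in I -> (forall a, a \in I -> le x a) ->
         y \in J -> (forall a, a \in J -> le y a) ->
         I :\ x = J :\ y -> I = J)].

Definition connected_poset D le : Prop :=
  forall x y, x \in D -> y \in D ->
    exists s : seq T,
      [/\ path (fun a b => [&& a \in D, b \in D & (le a b || le b a)]) x s & last x s = y].

(* The poset (T, le) is a mobile poset with underlying border strip la/mu:
   - [strip] is the set of border-strip elements, [pos] identifies it with [la/mu];
   - every other element belongs to a hanging poset whose maximal element is [top x];
   - [anchor x] is the border-strip cell from which x hangs (anchor x = x on the strip);
   - the order is: the border strip poset on the strip, the order of each hanging
     poset inside it, and each hanging poset lies below its anchor cell (which covers
     the hanging poset's maximal element); hanging posets are connected d-complete
     with a unique maximal element. *)
Definition hanging (strip : {set T}) (top : T -> T) (t : T) : {set T} :=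
  [set y | (y \notin strip) && (top y == t)].

Definition mobile_poset (la mu : seq nat) le (strip : {set T}) (pos : T -> cell)
  (anchor top : T -> T) : Prop :=
  [/\ partial_order le,
      {in strip &, injective pos},
      (forall c, in_skew la mu c <-> exists2 x, x \in strip & pos x = c),
      (forall x, anchor x \in strip) &
      (forall x, x \in strip -> anchor x = x)] /\
  [/\ (forall a b, b \in strip -> le a b = strip_le (pos (anchor a)) (pos b)),
      (forall a b, a \in strip -> b \notin strip -> ~~ le a b),
      (forall a b, a \notin strip -> b \notin strip -> le a b -> top a = top b),
      (forall x, x \notin strip ->
         [/\ top x \notin strip, top (top x) = top x & anchor x = anchor (top x)]) &
      (forall t, t \notin strip -> top t = t ->
         [/\ connected_poset (hanging strip top t) le,
             d_complete (hanging strip top t) le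
           & forall y, y \in hanging strip top t -> le y t])].

Definition maj (s : seq int) : nat :=
  \sum_(i < (size s).-1 | (nth 0 s i.+1 < nth 0 s i)%R) i.+1.

(* s = (g^-1(1), ..., g^-1(r)) for an order-preserving bijection g : S -> [r] *)
Definition linext le (S : {set T}) (s : seq T) : bool :=
  perm_eq s (enum S) &&
  [forall x in S, forall y in S, le x y ==> (index x s <= index y s)].

Definition eqmaj le (omega : T -> int) (S : {set T}) : {poly int} :=
  (\sum_(s <- permutations (enum S) | linext le S s) 'X^(maj (map omega s)))%R.

End Posets.

(* Removing the last letter of a linear extension gives e(S) = Σ_m E_{ω(m)}(S ∖ m) over
   the maximal elements m of S, where E_y(S) is the maj generating function of the linear
   extensions of S followed by one more letter y.  When S is the union of two mutually
   incomparable parts A and B, the linear extensions of S are the shuffles of those of A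
   and B, and E_y(A ∪ B) = [|A|+|B| choose |A|]_q E_y(A) E_y(B).  Also E_y(S) = q^|S| e(S)
   if y is below every maximal label of S, and E_y(S) = e(S) if y is above them all.
   The maximal elements of a mobile poset P are its inner corners u, and P ∖ u splits into
   two incomparable parts: the elements hanging from cells of content less than c(u), whose
   maximal elements lie on the strip and so have labels above ω(u), and the rest, whose
   maximal labels are below ω(u) (off the strip such a maximal element is the top of a
   poset hanging from u, and u covers it).  Comparing the shuffle identity at y = ω(u) and
   at a large y gives E_{ω(u)}(P ∖ u) = q^|P_{λ/ν₁}| e(P ∖ u). *)

From HB Require Import structures.
From mathcomp Require Import all_boot all_order all_algebra.
From mathcomp Require Import boolp.
From mathcomp Require Import zify ring.
Import Order.TTheory GRing.Theory Num.Theory.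
Set Implicit Arguments. Unset Strict Implicit. Unset Printing Implicit Defensive.

Local Open Scope ring_scope.

Fixpoint qbinom (n k : nat) : {poly int} :=
  match n, k with
  | _, 0 => 1
  | 0, _.+1 => 0
  | n.+1, k.+1 => qbinom n k + 'X^(k.+1) * qbinom n k.+1
  end.

Arguments qbinom : simpl never.

Lemma qbinom0 n : qbinom n 0 = 1. Proof. by case: n. Qed.

Lemma qbinomS n k : qbinom n.+1 k.+1 = qbinom n k + 'X^(k.+1) * qbinom n k.+1.
Proof. by []. Qed.

Lemma qbinom_small n k : (n < k)%N -> qbinom n k = 0.
Proof.
by elim: n k => [|n IH] [|k] // ltnk; rewrite qbinomS !IH ?mulr0 ?addr0 // ltnW.
Qed.

Lemma qbinomnn n : qbinom n n = 1.
Proof. by elim: n => // n IH; rewrite qbinomS IH qbinom_small // mulr0 addr0. Qed.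

Lemma qbinomS_rev n k : (k <= n)%N ->
  qbinom n.+1 k.+1 = 'X^(n - k) * qbinom n k + qbinom n k.+1.
Proof.
elim: n k => [|n IH] [|k] // le_kn.
- by rewrite !qbinomnn qbinom_small // expr0 mulr1 addr0.
- by rewrite [in RHS]qbinomS [LHS]qbinomS (IH 0%N) // !qbinom0 !subn0 (exprS _ n); ring.
- have [->|lt_kn] : k = n \/ (k < n)%N by lia.
    by rewrite !qbinomnn qbinom_small // subnn expr0 mulr1 addr0.
  rewrite ![in RHS]qbinomS [LHS]qbinomS (IH k) 1?ltnW // (IH k.+1) // subSS.
  rewrite !mulrDr !mulrA -!exprD.
  have -> : (k.+2 + (n - k.+1) = n - k + k.+1)%N by lia.
  by ring.
Qed.

Lemma qbinom_sym a b : qbinom (a + b) a = qbinom (a + b) b.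
Proof.
elim: a b => [|a IHa] b; first by rewrite qbinom0 qbinomnn.
elim: b => [|b IHb]; first by rewrite qbinom0 addn0 qbinomnn.
rewrite addSn qbinomS IHa -addSnnS IHb qbinomS_rev ?leq_addl // addnK.
by rewrite addrC.
Qed.

(* The shuffle recursion ends either with a letter [u] of the first part or with a
   letter [v] of the second one. *)
Lemma qbinom_last_letter (y u v : int) (a b : nat) : u != v ->
  'X^((a + b).+2 * (y < u)%R) * qbinom (a + b).+1 a * 'X^(b.+1 * (u < v)%R) +
  'X^((a + b).+2 * (y < v)%R) * qbinom (a + b).+1 b * 'X^(a.+1 * (v < u)%R) =
  qbinom (a + b).+2 a.+1 * 'X^(a.+1 * (y < u)%R) * 'X^(b.+1 * (y < v)%R).
Proof.
wlog ltuv : a b u v / u < v => [hwlog neq_uv|_].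
  move: (neq_uv); rewrite neq_lt => /orP[ltuv|ltvu]; first exact: hwlog.
  rewrite addrC (addnC a b) (hwlog b a v u) 1?eq_sym //.
  have -> : (b + a).+2 = (a.+1 + b.+1)%N by rewrite addnC addnS.
  by rewrite qbinom_sym mulrAC.
have split_N : 'X^((a + b).+2) = 'X^(a.+1) * 'X^(b.+1) :> {poly int}.
  by rewrite -exprD addSn addnS.
have pascal := qbinomS (a + b).+1 a.
have pascal_rev : qbinom (a + b).+2 a.+1 =
    'X^(b.+1) * qbinom (a + b).+1 a + qbinom (a + b).+1 a.+1.
  by rewrite qbinomS_rev ?leqW ?leq_addr //; congr (_ ^+ _ * _ + _); lia.
rewrite -[qbinom _ b](qbinom_sym a.+1 b) addSn (lt_gtF ltuv) ltuv.
rewrite !muln0 !muln1 expr0 mulr1.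
have [ltyu|leuy] := ltP y u.
  by rewrite (lt_trans ltyu ltuv) !muln1 split_N pascal_rev; ring.
rewrite !muln0 expr0; case: (y < v)%R; rewrite ?muln1 ?muln0.
  by rewrite split_N pascal; ring.
by rewrite pascal_rev; ring.
Qed.

Local Close Scope ring_scope.

Section LinearExtensions.
Variables (T : finType) (le : rel T).
Implicit Types (S : {set T}) (s : seq T) (m x y : T).

Definition maximal_in S m := [forall z in S, le m z ==> (z == m)].

Definition linexts S := [seq s <- permutations (enum S) | linext le S s].

Lemma linext_perm S s : linext le S s -> perm_eq s (enum S).
Proof. by case/andP. Qed.

Lemma mem_linexts S s : (s \in linexts S) = linext le S s.
Proof.
by rewrite mem_filter mem_permutations andb_idr // => /linext_perm.
Qed.

Lemma linexts_uniq S : uniq (linexts S).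
Proof. exact/filter_uniq/permutations_uniq. Qed.

Lemma index_rcons_mem s m x : x \in s -> index x (rcons s m) = index x s.
Proof. by move=> xs; rewrite -cats1 index_cat xs. Qed.

Lemma index_rcons_last s m : m \notin s -> index m (rcons s m) = size s.
Proof. by move=> ms; rewrite -cats1 index_cat (negbTE ms) /= eqxx addn0. Qed.

Lemma perm_rcons_enum S s m : m \in S ->
  perm_eq (rcons s m) (enum S) = perm_eq s (enum (S :\ m)).
Proof.
move=> mS; have enumS : perm_eq (enum S) (m :: enum (S :\ m)).
  apply: uniq_perm; rewrite ?enum_uniq //= ?mem_enum ?setD11 ?enum_uniq //.
  by move=> x; rewrite in_cons !mem_enum in_setD1; case: eqP => [->|].
by rewrite (perm_rcons m s (enum S)) (permPr enumS) perm_cons.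
Qed.

Lemma linext_rcons S s m : m \in S -> maximal_in S m ->
  linext le S (rcons s m) = linext le (S :\ m) s.
Proof.
move=> mS /forall_inP maxm; rewrite /linext perm_rcons_enum //.
case perm_s: (perm_eq s _) => //=; have mem_s := perm_mem perm_s.
have ms : m \notin s by rewrite mem_s mem_enum setD11.
have memS x : x \in S -> x != m -> x \in s.
  by move=> xS xm; rewrite mem_s mem_enum in_setD1 xm.
apply/forall_inP/forall_inP => [le_idx x | le_idx x xS].
  rewrite in_setD1 => /andP[xm xS]; apply/forall_inP => y; rewrite in_setD1.
  case/andP=> ym yS; have /forall_inP/(_ y yS) := le_idx x xS.
  by rewrite !index_rcons_mem // ?memS.
apply/forall_inP => y yS; apply/implyP => lexy.
have [exm | xm] := eqVneq x m.
  by move: lexy; rewrite exm => /(implyP (maxm y yS)) /eqP ->.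
rewrite index_rcons_mem ?memS //; have [-> | ym] := eqVneq y m.
  by rewrite index_rcons_last // ltnW // index_mem memS.
have xSm : x \in S :\ m by rewrite in_setD1 xm xS.
have ySm : y \in S :\ m by rewrite in_setD1 ym yS.
by rewrite index_rcons_mem ?memS // (implyP (forall_inP (le_idx x xSm) y ySm)).
Qed.

Lemma linext_rcons_maximal S s m : linext le S (rcons s m) -> m \in S /\ maximal_in S m.
Proof.
case/andP=> /[dup] /perm_uniq; rewrite enum_uniq rcons_uniq => /andP[ms _].
move=> /perm_mem mem_sm /forall_inP le_idx.
have mS : m \in S by rewrite -mem_enum -mem_sm mem_rcons mem_head.
split=> //; apply/forall_inP => z zS; apply/implyP => lemz; apply/negPn/negP => zm.
have zs : z \in s by move: zS; rewrite -mem_enum -mem_sm mem_rcons in_cons (negbTE zm).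
have := implyP (forall_inP (le_idx m mS) z zS) lemz.
by rewrite index_rcons_last // (index_rcons_mem m zs) leqNgt index_mem zs.
Qed.

Lemma linexts_by_last S : S != set0 ->
  perm_eq (linexts S)
    [seq rcons s m | m <- [seq m <- enum S | maximal_in S m], s <- linexts (S :\ m)].
Proof.
case/set0Pn=> x0 x0S; apply: uniq_perm; first exact: linexts_uniq.
  apply: allpairs_uniq_dep => [|m _|[m s] [m' s'] _ _ /rcons_inj [/= -> ->]] //.
    exact/filter_uniq/enum_uniq.
  exact: linexts_uniq.
move=> s; rewrite mem_linexts; apply/idP/allpairsPdep => [les | [m [t [mM tL ->]]]].
  case/lastP: s les => [/linext_perm/perm_mem/(_ x0) | t m les].
    by rewrite mem_enum x0S.
  have [mS maxm] := linext_rcons_maximal les.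
  by exists m, t; rewrite mem_filter mem_enum maxm mS mem_linexts -linext_rcons.
move: mM; rewrite mem_filter mem_enum => /andP[maxm mS].
by rewrite linext_rcons // -mem_linexts.
Qed.

Lemma sum_linexts_by_last (R : nmodType) S (F : seq T -> R) : S != set0 ->
  (\sum_(s <- linexts S) F s =
   \sum_(m in S | maximal_in S m) \sum_(s <- linexts (S :\ m)) F (rcons s m))%R.
Proof.
move=> SN; rewrite (perm_big _ (linexts_by_last SN)) big_allpairs_dep.
by rewrite big_filter big_enum_cond.
Qed.

End LinearExtensions.

Lemma maj_rcons (w : seq int) a y :
  maj (rcons (rcons w a) y) = maj (rcons w a) + (size w).+1 * (y < a)%R.
Proof.
rewrite /maj !size_rcons /= big_mkcond big_ord_recr /= -big_mkcond /=.
rewrite nth_rcons size_rcons ltnn eqxx nth_rcons size_rcons ltnSn nth_rcons ltnn eqxx.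
congr (_ + _); last by case: (y < a)%R; rewrite ?muln1 ?muln0.
apply: eq_bigl => i; rewrite (nth_rcons _ (rcons w a) y i.+1) (nth_rcons _ (rcons w a) y i).
by rewrite size_rcons ltnS (ltn_ord i) ltnW // ltnS (ltn_ord i).
Qed.

Section MajWithFinalLetter.
Variables (T : finType) (le : rel T) (omega : T -> int).
Implicit Types (S A B : {set T}) (y : int).

Local Open Scope ring_scope.

Local Notation maximal_in := (maximal_in le).
Local Notation linexts := (linexts le).

Definition eqmaj_rcons y S : {poly int} :=
  \sum_(s <- linexts S) 'X^(maj (rcons (map omega s) y)).

Lemma eqmaj_linexts S : eqmaj le omega S = \sum_(s <- linexts S) 'X^(maj (map omega s)).
Proof. by rewrite /eqmaj big_filter. Qed.

Lemma linexts_size S s : s \in linexts S -> size s = #|S|.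
Proof. by rewrite mem_linexts => /linext_perm/perm_size; rewrite -cardE. Qed.

Lemma linexts_set0 : linexts set0 = [:: [::]].
Proof.
rewrite /linexts enum_set0 /= /linext enum_set0 perm_refl /=.
by case: forall_inP => // -[x]; rewrite inE.
Qed.

Lemma eqmaj_rcons_set0 y : eqmaj_rcons y set0 = 1.
Proof. by rewrite /eqmaj_rcons linexts_set0 big_seq1 /maj big_ord0. Qed.

Lemma eqmaj_set0 : eqmaj le omega set0 = 1.
Proof. by rewrite eqmaj_linexts linexts_set0 big_seq1 /maj big_ord0. Qed.

Lemma eqmaj_rcons_rec y S : S != set0 ->
  eqmaj_rcons y S = \sum_(m in S | maximal_in S m)
    'X^(#|S| * (y < omega m)%R) * eqmaj_rcons (omega m) (S :\ m).
Proof.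
move=> SN; rewrite /eqmaj_rcons sum_linexts_by_last //.
apply: eq_bigr => m /andP[mS _]; rewrite mulr_sumr; apply: eq_big_seq => s sL.
rewrite map_rcons maj_rcons size_map (linexts_size sL) -exprD addnC.
by rewrite [#|S|](cardsD1 m) mS.
Qed.

Lemma eqmaj_rec S : S != set0 ->
  eqmaj le omega S = \sum_(m in S | maximal_in S m) eqmaj_rcons (omega m) (S :\ m).
Proof.
move=> SN; rewrite eqmaj_linexts sum_linexts_by_last //.
by apply: eq_bigr => m _; apply: eq_bigr => s _; rewrite map_rcons.
Qed.

Definition incomparable A B := forall a b, a \in A -> b \in B -> ~~ le a b && ~~ le b a.

Lemma incomparable_sym A B : incomparable A B -> incomparable B A.
Proof. by move=> incAB b a bB aA; rewrite andbC; apply: incAB. Qed.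

Lemma incomparableS A B A' B' : A' \subset A -> B' \subset B ->
  incomparable A B -> incomparable A' B'.
Proof. by move=> /subsetP sA /subsetP sB incAB a b /sA aA /sB bB; apply: incAB. Qed.

Lemma maximal_inUl A B m : incomparable A B -> m \in A ->
  maximal_in (A :|: B) m = maximal_in A m.
Proof.
move=> incAB mA; apply/forall_inP/forall_inP => maxm z zAB.
  by apply: maxm; rewrite inE zAB.
case/setUP: zAB => [zA | zB]; first exact: maxm.
by case/andP: (incAB m z mA zB) => /negbTE->.
Qed.

Lemma sum_maximal_inU (R : nmodType) A B (F : T -> R) :
  [disjoint A & B] -> incomparable A B ->
  \sum_(m in A :|: B | maximal_in (A :|: B) m) F m =
  \sum_(m in A | maximal_in A m) F m + \sum_(m in B | maximal_in B m) F m.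
Proof.
move=> dAB incAB; rewrite big_mkcondr (eq_bigl [predU A & B]) => [|x]; last by rewrite !inE.
rewrite bigU //; congr (_ + _); rewrite [RHS]big_mkcondr; apply: eq_bigr => m mX.
  by rewrite maximal_inUl.
by rewrite setUC maximal_inUl //; apply: incomparable_sym.
Qed.

Definition shuffle_below n := forall A B y, (#|A| + #|B| < n)%N ->
  [disjoint A & B] -> incomparable A B ->
  eqmaj_rcons y (A :|: B) = qbinom (#|A| + #|B|) #|A| * eqmaj_rcons y A * eqmaj_rcons y B.

Lemma eqmaj_rcons_shuffle_side A B a b n y :
  #|A| = a.+1 -> #|B| = b.+1 -> [disjoint A & B] -> incomparable A B ->
  shuffle_below n -> (#|A| + #|B| <= n)%N ->
  \sum_(m in A | maximal_in A m)
     'X^(#|A :|: B| * (y < omega m)%R) * eqmaj_rcons (omega m) ((A :|: B) :\ m) =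
  \sum_(m in A | maximal_in A m) \sum_(m' in B | maximal_in B m')
     'X^(#|A :|: B| * (y < omega m)%R) * qbinom (a + b).+1 a *
       'X^(b.+1 * (omega m < omega m')%R) *
     (eqmaj_rcons (omega m) (A :\ m) * eqmaj_rcons (omega m') (B :\ m')).
Proof.
move=> cardA cardB dAB incAB shuffle le_n; apply: eq_bigr => m /andP[mA _].
have cardAm : #|A :\ m| = a by apply/succn_inj; rewrite -cardA (cardsD1 m A) mA.
have -> : (A :|: B) :\ m = (A :\ m) :|: B.
  apply/setP => x; rewrite !inE; case: eqP => // ->.
  by rewrite (disjointFr dAB mA).
rewrite shuffle ?cardAm ?cardB; first last.
- by apply: incomparableS incAB; rewrite ?subD1set.
- by apply: disjointWl dAB; apply: subD1set.
- by move: le_n; rewrite cardA cardB addSn.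
rewrite (eqmaj_rcons_rec _ (_ : B != set0)) -?card_gt0 ?cardB // mulr_sumr mulr_sumr.
by apply: eq_bigr => m' _; rewrite addnS; ring.
Qed.

Lemma eqmaj_rcons_shuffle_step n : injective omega -> shuffle_below n -> shuffle_below n.+1.
Proof.
move=> omega_inj shuffle A B y; rewrite ltnS => le_n dAB incAB.
have [-> | AN] := eqVneq A set0.
  by rewrite set0U cards0 qbinom0 eqmaj_rcons_set0 !mul1r.
have [-> | BN] := eqVneq B set0.
  by rewrite setU0 cards0 addn0 qbinomnn eqmaj_rcons_set0 mul1r mulr1.
have [a cardA] : {a | #|A| = a.+1} by exists #|A|.-1; rewrite prednK // card_gt0.
have [b cardB] : {b | #|B| = b.+1} by exists #|B|.-1; rewrite prednK // card_gt0.
have cardAB : #|A :|: B| = (a + b).+2.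
  by rewrite cardsU disjoint_setI0 // cards0 subn0 cardA cardB addnS.
rewrite eqmaj_rcons_rec; last by rewrite -card_gt0 cardAB.
rewrite sum_maximal_inU // [in X in _ + X]setUC.
rewrite (eqmaj_rcons_shuffle_side _ cardA cardB dAB incAB shuffle le_n).
rewrite (eqmaj_rcons_shuffle_side _ cardB cardA _ (incomparable_sym incAB) shuffle);
  rewrite 1?disjoint_sym 1?[(#|B| + _)%N]addnC //.
rewrite (setUC B A) cardAB [(b + a)%N]addnC [X in _ + X]exchange_big -big_split.
rewrite (eqmaj_rcons_rec y AN) (eqmaj_rcons_rec y BN) cardA cardB addSn addnS.
rewrite -mulrA big_distrlr mulr_sumr; apply: eq_bigr => m /andP[mA _].
rewrite -big_split mulr_sumr; apply: eq_bigr => m' /andP[mB _] /=.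
have neq : omega m != omega m'.
  by apply: contraTneq mB => /omega_inj <-; rewrite (disjointFr dAB mA).
by rewrite [eqmaj_rcons _ (B :\ _) * _]mulrC -mulrDl qbinom_last_letter //; ring.
Qed.

Lemma eqmaj_rcons_shuffle A B y : injective omega ->
  [disjoint A & B] -> incomparable A B ->
  eqmaj_rcons y (A :|: B) = qbinom (#|A| + #|B|) #|A| * eqmaj_rcons y A * eqmaj_rcons y B.
Proof.
move=> omega_inj; apply: (_ : shuffle_below (#|A| + #|B|).+1) => //.
by elim: (#|A| + #|B|).+1 => // n; apply: eqmaj_rcons_shuffle_step.
Qed.

Lemma eqmaj_rcons_lt y S : (forall m, m \in S -> maximal_in S m -> y < omega m) ->
  eqmaj_rcons y S = 'X^#|S| * eqmaj le omega S.
Proof.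
have [-> _ | SN ltym] := eqVneq S set0.
  by rewrite eqmaj_rcons_set0 eqmaj_set0 cards0 mulr1.
rewrite eqmaj_rcons_rec // eqmaj_rec // mulr_sumr.
by apply: eq_bigr => m /andP[mS maxm]; rewrite ltym // muln1.
Qed.

Lemma eqmaj_rcons_gt y S : (forall m, m \in S -> maximal_in S m -> omega m < y) ->
  eqmaj_rcons y S = eqmaj le omega S.
Proof.
have [-> _ | SN ltmy] := eqVneq S set0; first by rewrite eqmaj_rcons_set0 eqmaj_set0.
rewrite eqmaj_rcons_rec // eqmaj_rec //; apply: eq_bigr => m /andP[mS maxm].
by rewrite lt_gtF ?ltmy // muln0 mul1r.
Qed.

Lemma omega_ub : {y0 | forall x, omega x < y0}.
Proof.
exists (1 + \sum_x `|omega x|) => x; rewrite ltr_pwDl // (bigD1 x) //=.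
by rewrite (le_trans (ler_norm _)) // lerDl sumr_ge0.
Qed.

Lemma eqmaj_shuffle A B : injective omega -> [disjoint A & B] -> incomparable A B ->
  eqmaj le omega (A :|: B) = qbinom (#|A| + #|B|) #|A| * eqmaj le omega A * eqmaj le omega B.
Proof.
move=> omega_inj dAB incAB; have [y0 lt_y0] := omega_ub.
have eqmajE S : eqmaj le omega S = eqmaj_rcons y0 S by rewrite eqmaj_rcons_gt.
by rewrite !eqmajE eqmaj_rcons_shuffle.
Qed.

Lemma eqmaj_rcons_split y A B : injective omega ->
  [disjoint A & B] -> incomparable A B ->
  (forall m, m \in A -> maximal_in A m -> y < omega m) ->
  (forall m, m \in B -> maximal_in B m -> omega m < y) ->
  eqmaj_rcons y (A :|: B) = 'X^#|A| * eqmaj le omega (A :|: B).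
Proof.
move=> omega_inj dAB incAB ltyA ltBy.
rewrite eqmaj_rcons_shuffle // eqmaj_shuffle // (eqmaj_rcons_lt ltyA) (eqmaj_rcons_gt ltBy).
ring.
Qed.

End MajWithFinalLetter.

Lemma nth_gt0_size (s : seq nat) k : 0 < nth 0 s k -> k < size s.
Proof. by apply: contraTT; rewrite -leqNgt => /(nth_default 0) ->. Qed.

Lemma in_diagE la c : in_diag la c = [&& 0 < c.1, 0 < c.2 & c.2 <= nth 0 la c.1.-1].
Proof.
case: c => i j; rewrite /in_diag /=.
apply/and4P/and3P => [[-> _ -> ->] // | [i0 j0 jl]]; split=> //.
by have := nth_gt0_size (leq_trans j0 jl); lia.
Qed.

Lemma is_partitionP la : is_partition la <->
  (forall k, nth 0 la k.+1 <= nth 0 la k) /\ (forall k, k < size la -> 0 < nth 0 la k).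
Proof.
split=> [/andP[/(sortedP 0) srt /(all_nthP 0) pos] | [srt pos]].
  split=> // k; have [ks | ks] := ltnP k.+1 (size la); first exact: srt.
  by rewrite nth_default.
by apply/andP; split; [apply/(sortedP 0) => k _; apply: srt | apply/(all_nthP 0)].
Qed.

Lemma partition_nth_le la i k : is_partition la -> i <= k -> nth 0 la k <= nth 0 la i.
Proof.
case/is_partitionP => srt _; move: i k.
apply: (@homo_leq _ _ (fun a b => b <= a)) => // y x z le_yx le_zy.
exact: leq_trans le_zy le_yx.
Qed.

Lemma in_diag_le la i j i' j' : is_partition la -> in_diag la (i', j') ->
  0 < i <= i' -> 0 < j <= j' -> in_diag la (i, j).
Proof.
rewrite !in_diagE /= => pla /and3P[_ _ le_j'] /andP[i0 le_i] /andP[j0 le_j].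
rewrite i0 j0 (leq_trans le_j (leq_trans le_j' _)) // partition_nth_le //; lia.
Qed.

Lemma in_diag_incr_nth mu i j c : 0 < i -> 0 < j -> nth 0 mu i.-1 = j.-1 ->
  in_diag (incr_nth mu i.-1) c = in_diag mu c || (c == (i, j)).
Proof.
case: c => a b i0 j0 row_i; rewrite !in_diagE nth_incr_nth /= xpair_eqE.
have [-> | ai] := eqVneq a i; first by rewrite eqxx row_i; lia.
have [-> // | a0] := posnP a.
by rewrite (_ : (i.-1 == a.-1) = false) //; lia.
Qed.

Lemma incr_nth_partition mu k : is_partition mu ->
  (0 < k -> nth 0 mu k < nth 0 mu k.-1) -> is_partition (incr_nth mu k).
Proof.
case/is_partitionP => srt pos row_k; apply/is_partitionP; split=> n.
  rewrite !nth_incr_nth; have [ekn | _] := eqVneq k n.+1.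
    by move: row_k; rewrite ekn /= (gtn_eqF (ltnSn n)); lia.
  by have := srt n; lia.
rewrite size_incr_nth nth_incr_nth; have [-> // | nkn] := eqVneq k n.
rewrite add0n => ltn; apply: pos; case: ifP ltn => // /negbT; rewrite -leqNgt => szk ltn.
have k0 : 0 < k by lia.
by have := nth_gt0_size (leq_ltn_trans (leq0n _) (row_k k0)); lia.
Qed.

Section SkewShapes.
Variables la mu : seq nat.
Hypotheses (pla : is_partition la) (pmu : is_partition mu).

Lemma in_skew_interval i j i' j' k l : in_skew la mu (i, j) -> in_skew la mu (i', j') ->
  i <= k <= i' -> j <= l <= j' -> in_skew la mu (k, l).
Proof.
case/andP=> /[dup] ij_la; rewrite in_diagE /= => /and3P[i0 j0 _] ij_mu.
case/andP=> ij'_la _ /andP[le_ik le_ki'] /andP[le_jl le_lj'].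
have kl_la : in_diag la (k, l).
  by apply: (in_diag_le pla ij'_la); rewrite ?(leq_trans i0 le_ik) ?(leq_trans j0 le_jl).
rewrite /in_skew kl_la /=; apply: contra ij_mu => kl_mu.
by apply: (in_diag_le pmu kl_mu); rewrite ?i0 ?j0.
Qed.

Hypothesis no_square : forall i j, ~ [/\ in_skew la mu (i, j), in_skew la mu (i.+1, j),
  in_skew la mu (i, j.+1) & in_skew la mu (i.+1, j.+1)].

Lemma in_skew_no_SE i j i' j' : in_skew la mu (i, j) -> in_skew la mu (i', j') ->
  i < i' -> j < j' -> False.
Proof.
move=> ij i'j' lt_i lt_j; apply: (no_square (i := i) (j := j)).
by split=> //; apply: (in_skew_interval ij i'j'); apply/andP; split; lia.
Qed.

Lemma content_le_skew a b : in_skew la mu a -> in_skew la mu b ->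
  (content a <= content b)%R -> b.1 <= a.1 /\ a.2 <= b.2.
Proof.
case: a b => [i j] [i' j'] sa sb; rewrite /content /= => le_c.
split; rewrite leqNgt; apply/negP => lt.
  by have [lt_j | ] := ltnP j j'; [apply: (in_skew_no_SE sa sb) | lia].
by have [lt_i | ] := ltnP i' i; [apply: (in_skew_no_SE sb sa) | lia].
Qed.

Lemma content_inj_skew a b : in_skew la mu a -> in_skew la mu b ->
  content a = content b -> a = b.
Proof.
move=> sa sb e; have := content_le_skew sa sb; have := content_le_skew sb sa.
rewrite e lexx => /(_ isT)[le1 le2] /(_ isT)[le3 le4].
by case: a b {sa sb e} => [i j] [i' j'] /= in le1 le2 le3 le4 *; congr pair; lia.
Qed.

Lemma inner_cornerP u : inner_corner la mu u <-> in_skew la mu u /\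
  (forall d, in_skew la mu d -> d.1 <= u.1 -> d.2 <= u.2 -> d = u).
Proof.
case: u => i j; split=> [[su [nu [pnu nuE]]] | [su umin]].
  split=> // -[a b] /[dup] sd /andP[_ ab_mu] /= le_ai le_bj.
  have u_nu : in_diag nu (i, j) by rewrite nuE eqxx orbT.
  have [/= a0 b0] : 0 < a /\ 0 < b by case/andP: sd; rewrite in_diagE => /and3P[].
  have := in_diag_le pnu u_nu (_ : 0 < a <= i) (_ : 0 < b <= j).
  by rewrite nuE (negbTE ab_mu) a0 b0 le_ai le_bj => /(_ isT isT) /eqP.
case/andP: (su) => ij_la; rewrite [in_diag mu _]in_diagE /= => ij_mu.
have [i0 j0] : 0 < i /\ 0 < j by move: ij_la; rewrite in_diagE => /and3P[].
have NW_mu k l : 0 < k <= i -> 0 < l <= j -> (k, l) != (i, j) -> in_diag mu (k, l).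
  move=> hk hl; apply: contraNT => kl_mu; apply/eqP.
  apply: umin; rewrite /= ?(andP hk).2 ?(andP hl).2 //.
  by rewrite /in_skew kl_mu andbT (in_diag_le pla ij_la).
have row_i : nth 0 mu i.-1 = j.-1.
  move: ij_mu; rewrite i0 j0 /= -ltnNge => lt_row.
  apply/eqP; rewrite eqn_leq -ltnS prednK // lt_row.
  have [j1 | lt1j] := leqP j 1; first by rewrite (_ : j.-1 = 0) //; lia.
  have : in_diag mu (i, j.-1) by apply: NW_mu; rewrite ?xpair_eqE; lia.
  by rewrite in_diagE => /and3P[].
have row_above : 0 < i.-1 -> nth 0 mu i.-1 < nth 0 mu i.-2.
  move=> i1; have : in_diag mu (i.-1, j) by apply: NW_mu; rewrite ?xpair_eqE; lia.
  rewrite in_diagE => /and3P[_ _ le_j].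
  by rewrite row_i prednK.
split=> //; exists (incr_nth mu i.-1); split; first exact: (incr_nth_partition pmu row_above).
by move=> c; apply: in_diag_incr_nth.
Qed.

Lemma inner_corner_between u x z : inner_corner la mu u ->
  in_skew la mu x -> in_skew la mu z -> z.1 <= x.1 -> z.2 <= x.2 ->
  (content x <= content u <= content z)%R || (content z <= content u <= content x)%R ->
  z = u.
Proof.
case/inner_cornerP => su umin sx sz le1 le2 between.
suff [] : z.1 <= u.1 /\ z.2 <= u.2 by apply: umin.
case/orP: between => /andP[c1 c2].
  have [? ?] := content_le_skew sx su c1; have [? ?] := content_le_skew su sz c2; lia.
have [? ?] := content_le_skew sz su c1; have [? ?] := content_le_skew su sx c2; lia.
Qed.

End SkewShapes.

Lemma strip_le_anti c d : strip_le c d -> strip_le d c -> c = d.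
Proof. by case: c d => [i j] [i' j'] /andP[/= ? ?] /andP[/= ? ?]; congr pair; lia. Qed.

Section MobilePoset.
Variables (la mu : seq nat) (T : finType) (le : rel T) (strip : {set T})
  (pos : T -> cell) (anchor top : T -> T).
Hypotheses (pla : is_partition la) (pmu : is_partition mu)
  (mob : mobile_poset la mu le strip pos anchor top).

Local Notation maximal_in := (maximal_in le).

Lemma mobile_antisym : antisymmetric le.
Proof. by case: mob => [[[]]]. Qed.

Lemma pos_inj : {in strip &, injective pos}.
Proof. by case: mob => [[]]. Qed.

Lemma in_skewP c : in_skew la mu c <-> exists2 x, x \in strip & pos x = c.
Proof. by case: mob => [[]]. Qed.

Lemma anchor_strip x : anchor x \in strip.
Proof. by case: mob => [[]]. Qed.

Lemma anchor_id x : x \in strip -> anchor x = x.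
Proof. by case: mob => [[_ _ _ _ id_strip] _]; apply: id_strip. Qed.

Lemma le_strip a b : b \in strip -> le a b = strip_le (pos (anchor a)) (pos b).
Proof. by case: mob => [_ [le_strip_ _ _ _ _]]; apply: le_strip_. Qed.

Lemma top_hanging x : x \notin strip ->
  [/\ top x \notin strip, top (top x) = top x & anchor x = anchor (top x)].
Proof. by case: mob => [_ [_ _ _ hang _]]; apply: hang. Qed.

Lemma le_off_strip a b : le a b -> b \notin strip ->
  [/\ a \notin strip, top a = top b & anchor a = anchor b].
Proof.
case: mob => [_ [_ not_le same_top _ _]] leab bNs.
have aNs : a \notin strip by apply: contraL leab => aS; apply: not_le.
have etop := same_top a b aNs bNs leab.
by split=> //; have [_ _ ->] := top_hanging aNs; have [_ _ ->] := top_hanging bNs; rewrite etop.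
Qed.

Lemma le_hanging_top t y : t \notin strip -> top t = t -> y \notin strip -> top y = t -> le y t.
Proof.
case: mob => [_ [_ _ _ _ hanging_]] tNs tt yNs yt.
have [_ _ le_t] := hanging_ t tNs tt; apply: le_t.
by rewrite /hanging inE yNs yt eqxx.
Qed.

Lemma pos_skew x : x \in strip -> in_skew la mu (pos x).
Proof. by move=> xs; apply/in_skewP; exists x. Qed.

Lemma le_anchor x : le x (anchor x).
Proof. by rewrite le_strip ?anchor_strip // /strip_le !leqnn. Qed.

Lemma maximal_in_strip (S : {set T}) m :
  m \in S -> anchor m \in S -> maximal_in S m -> m \in strip.
Proof.
move=> mS amS /forall_inP /(_ _ amS) /implyP /(_ (le_anchor m)) /eqP <-.
exact: anchor_strip.
Qed.

Lemma covers_anchor_top t : t \notin strip -> top t = t -> covers [set: T] le t (anchor t).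
Proof.
move=> tNs tt; rewrite /covers !in_setT le_anchor /=.
have -> /= : t != anchor t by apply: contraNneq tNs => ->; apply: anchor_strip.
apply/forall_inP => z _; apply/and4P => -[zt zat letz lezat].
have [zs | zNs] := boolP (z \in strip).
  move: letz lezat; rewrite !le_strip ?anchor_strip // (anchor_id zs) => le1 le2.
  by move: zat; rewrite (pos_inj zs (anchor_strip t) (strip_le_anti le2 le1)) eqxx.
have [_ etop _] := le_off_strip letz zNs.
have lezt : le z t by apply: le_hanging_top; rewrite // -etop.
by move: zt; rewrite (@mobile_antisym z t) ?eqxx // lezt letz.
Qed.

Lemma maximal_in_setT m :
  maximal_in [set: T] m = (m \in strip) && `[< inner_corner la mu (pos m) >].
Proof.
apply/idP/andP => [maxm | [ms /asboolP /(inner_cornerP pla pmu) [_ umin]]].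
  have ms := maximal_in_strip (in_setT m) (in_setT _) maxm.
  split=> //; apply/asboolP/(inner_cornerP pla pmu); split; first exact: pos_skew.
  move=> d /in_skewP [x xs <-] le1 le2; congr pos; apply/eqP.
  apply: (implyP (forall_inP maxm x (in_setT x))).
  by rewrite le_strip // (anchor_id ms) /strip_le le1 le2.
apply/forall_inP => z _; apply/implyP => lemz.
have [zs | zNs] := boolP (z \in strip); last by case: (le_off_strip lemz zNs); rewrite ms.
move: lemz; rewrite le_strip // (anchor_id ms) => /andP[le1 le2].
by rewrite (pos_inj zs ms (umin _ (pos_skew zs) le1 le2)).
Qed.

(* [lower_part u] is P_{λ/ν₁} in the notation of the statement. *)
Definition lower_part u := [set x | (content (pos (anchor x)) < content (pos u))%R].
Definition upper_part u := ([set: T] :\ u) :\: lower_part u.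

Section InnerCorner.
Variables (omega : T -> int) (u : T).
Hypotheses (bs : border_strip la mu) (omega_inj : injective omega)
  (reversed_schur : forall x y, x \in strip -> y \in strip ->
     (content (pos x) < content (pos y))%R -> (omega y < omega x)%R)
  (natural : forall x y, x \notin strip -> covers [set: T] le x y -> (omega x < omega y)%R)
  (us : u \in strip) (uc : inner_corner la mu (pos u)).

Let no_square : forall i j, ~ [/\ in_skew la mu (i, j), in_skew la mu (i.+1, j),
  in_skew la mu (i, j.+1) & in_skew la mu (i.+1, j.+1)].
Proof. by case: bs. Qed.

Lemma lower_upper_partition : [set: T] :\ u = lower_part u :|: upper_part u.
Proof.
apply/setP => x; rewrite !inE; have [-> | _] := eqVneq x u.
  by rewrite (anchor_id us) ltxx.
by case: (_ < _)%R.
Qed.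

Lemma disjoint_lower_upper : [disjoint lower_part u & upper_part u].
Proof. by rewrite disjoints_subset /upper_part setDE setCI setCK subsetUr. Qed.

Lemma le_lower x y : y != u -> le x y -> (x \in lower_part u) = (y \in lower_part u).
Proof.
move=> yu lexy; have [ys | yNs] := boolP (y \in strip); last first.
  by case: (le_off_strip lexy yNs) => _ _; rewrite !inE => ->.
move: lexy; rewrite le_strip // !inE (anchor_id ys) => /andP[le1 le2].
have between : (content (pos (anchor x)) <= content (pos u) <= content (pos y))%R ||
    (content (pos y) <= content (pos u) <= content (pos (anchor x)))%R -> y = u.
  move=> btw; apply: pos_inj => //; apply: (inner_corner_between pla pmu no_square uc) btw;
    by rewrite ?pos_skew ?anchor_strip.
apply/idP/idP => lt; apply: contraTT yu; rewrite -leNgt negbK => le_c; apply/eqP/between.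
  by rewrite le_c (ltW lt).
by rewrite le_c (ltW lt) orbT.
Qed.

Lemma incomparable_lower_upper : incomparable le (lower_part u) (upper_part u).
Proof.
move=> a b al; rewrite !inE => /andP[bNl /andP[bu _]].
have au : a != u by apply: contraTneq al => ->; rewrite inE (anchor_id us) ltxx.
apply/andP; split; apply/negP.
  by move/(le_lower bu); rewrite al inE (negbTE bNl).
by move/(le_lower au); rewrite al inE (negbTE bNl).
Qed.

Lemma maximal_lower m : m \in lower_part u -> maximal_in (lower_part u) m ->
  (omega u < omega m)%R.
Proof.
move=> ml maxm; have ms : m \in strip.
  apply: (maximal_in_strip ml _ maxm).
  by move: ml; rewrite !inE (anchor_id (anchor_strip m)).
by apply: reversed_schur => //; rewrite inE (anchor_id ms) in ml.
Qed.

Lemma maximal_upper m : m \in upper_part u -> maximal_in (upper_part u) m ->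
  (omega m < omega u)%R.
Proof.
move=> mup maxm; move: (mup); rewrite !inE -leNgt => /andP[le_um /andP[m_u _]].
have [ms | mNs] := boolP (m \in strip).
  apply: reversed_schur => //; rewrite lt_neqAle -{2}(anchor_id ms) le_um andbT.
  apply: contra m_u => /eqP e; apply/eqP/(pos_inj ms us).
  by rewrite (content_inj_skew pla pmu no_square (pos_skew us) (pos_skew ms) e).
have [topNs top_top anchor_top] := top_hanging mNs.
have top_up : top m \in upper_part u.
  rewrite !inE -anchor_top -leNgt le_um andbT /=.
  by apply: contraNneq topNs => ->.
have etop : top m = m.
  by apply/eqP/(implyP (forall_inP maxm _ top_up)); apply: le_hanging_top.
have anchor_u : anchor m = u.
  apply: contraTeq mNs => amu; apply/negPn/(maximal_in_strip mup _ maxm).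
  by rewrite !inE (anchor_id (anchor_strip m)) -leNgt le_um amu.
by apply: natural => //; rewrite -anchor_u; apply: covers_anchor_top.
Qed.

Lemma eqmaj_rcons_corner : eqmaj_rcons le omega (omega u) ([set: T] :\ u) =
  ('X^#|lower_part u| * eqmaj le omega ([set: T] :\ u))%R.
Proof.
rewrite lower_upper_partition; apply: eqmaj_rcons_split => //.
- exact: disjoint_lower_upper.
- exact: incomparable_lower_upper.
- exact: maximal_lower.
- exact: maximal_upper.
Qed.

End InnerCorner.

End MobilePoset.

Theorem lemma4p2 (la mu : seq nat) (T : finType) (le : rel T) (strip : {set T})
  (pos : T -> cell) (anchor top : T -> T) (omega : T -> int) :
  is_partition la -> is_partition mu -> border_strip la mu ->
  mobile_poset la mu le strip pos anchor top ->
  injective omega ->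
  (* reversed Schur labeling on the border strip *)
  (forall x y, x \in strip -> y \in strip ->
     (content (pos x) < content (pos y))%R -> (omega y < omega x)%R) ->
  (* natural on the hanging d-complete posets *)
  (forall x y, x \notin strip -> covers [set: T] le x y -> (omega x < omega y)%R) ->
  eqmaj le omega [set: T] =
  (\sum_(u in strip | `[< inner_corner la mu (pos u) >])
     'X^#|[set x | (content (pos (anchor x)) < content (pos u))%R]|
       * eqmaj le omega ([set: T] :\ u))%R.
Proof.
move=> pla pmu bs mob omega_inj reversed_schur natural.
have : [set: T] != set0.
  case: bs => _ [c /(in_skewP mob c) [x _ _]] _ _.
  by apply/set0Pn; exists x; rewrite in_setT.
move/eqmaj_rec => ->; apply: eq_big => [m | m].
  by rewrite in_setT (maximal_in_setT pla pmu mob).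
rewrite in_setT (maximal_in_setT pla pmu mob) /= => /andP[ms /asboolP corner].
exact: (eqmaj_rcons_corner pla pmu mob bs omega_inj reversed_schur natural ms corner).
Qed.
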